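(* Let $s\in\mathbb{Z}$, and let $x\in G_{\alpha_s}$ and $y\in G_{\alpha_{s+1}}$ be such that $x\in \mathrm{Vor}_{G_{\alpha_{s+1}}}(y)$. Then $\mathrm{Vor}_{G_{\alpha_s}}(x)\subset \mathrm{Vor}_{G_{\alpha_{s+1}}}(y)$.
   Context: Fix $d\ge 1$, $\lambda>0$ and scales $\alpha_s:=\lambda 2^s$, $s\in\mathbb{Z}$. The grids $(G_{\alpha_s})_{s\in\mathbb{Z}}$ are subsets of $\mathbb{R}^d$ with $G_{\alpha_0}=\lambda\mathbb{Z}^d$ and, for every $s$, $G_{\alpha_{s+1}}=2(G_{\alpha_s}-O_s)+O_s+\frac{\alpha_s}{2}\varepsilon_s$ for some point $O_s\in G_{\alpha_s}$ and some sign vector $\varepsilon_s\in\{-1,+1\}^d$. Thus each $G_{\alpha_s}$ is a translate of $\alpha_s\mathbb{Z}^d$. For a grid $G$ and $x\in G$, $\mathrm{Vor}_G(x)$ denotes the Voronoi cell of $x$ with respect to $G$, i.e. the closed axis-parallel cube of side length $\alpha_s$ centered at $x$ when $G=G_{\alpha_s}$. *)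

From mathcomp Require Import all_boot all_order all_algebra.
From mathcomp Require Import reals.
Set Implicit Arguments. Unset Strict Implicit. Unset Printing Implicit Defensive.
Import Order.TTheory GRing.Theory Num.Theory.
Local Open Scope ring_scope.

Definition pt (R : realType) (d : nat) := 'I_d -> R.

Definition gridset (R : realType) (d : nat) := pt R d -> Prop.

Definition alpha (R : realType) (lam : R) (s : int) : R := lam * (2 : R) ^ s.

Definition scaled_lattice (R : realType) (d : nat) (lam : R) : gridset R d :=
  fun p => exists k : 'I_d -> int, forall i, p i = lam * (k i)%:~R.

Definition dist2 (R : realType) (d : nat) (p q : pt R d) : R :=
  \sum_(i < d) (p i - q i) ^+ 2.

Definition Vor (R : realType) (d : nat) (G : gridset R d) (x : pt R d) : gridset R d :=
  fun z => forall g, G g -> dist2 z x <= dist2 z g.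

(* Every grid G_s is a translate c + alpha_s Z^d: this holds for s = 0 and
   is transported both ways along the affine bijections defining G_(s+1)
   from G_s.  The Voronoi cell of a point y of c + b Z^d is the closed cube
   of half-side b/2 around y.  For x in G_s and y in G_(s+1), each
   coordinate of y - x is an odd multiple of alpha_s / 2; since x lies in
   the cube of half-side alpha_s around y, it is +-alpha_s / 2, and the
   triangle inequality puts the cube of half-side alpha_s / 2 around x
   inside the cube of half-side alpha_s around y. *)
From mathcomp Require Import all_boot all_order all_algebra.
From mathcomp Require Import reals.
From mathcomp Require Import zify ring lra.
Set Implicit Arguments. Unset Strict Implicit.
Import Order.TTheory GRing.Theory Num.Theory.
Local Open Scope ring_scope.

Section ShiftedLattice.
Variables (R : realType) (d : nat).
Implicit Types (b : R) (c p y z : pt R d) (P : gridset R d).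

Definition shifted_lattice b c : gridset R d :=
  fun p => exists k : 'I_d -> int, forall i, p i = c i + b * (k i)%:~R.

Lemma dist2_update z y g (i : 'I_d) :
  (forall j, j != i -> g j = y j) ->
  dist2 z g = dist2 z y - (z i - y i) ^+ 2 + (z i - g i) ^+ 2.
Proof.
move=> gE; rewrite /dist2 (bigD1 i) //= [in RHS](bigD1 i) //=.
rewrite (eq_bigr (fun j => (z j - y j) ^+ 2)); last by move=> j /gE ->.
ring.
Qed.

Lemma sqr_le_sqr_sub_intmul b (u : R) (k : int) :
  0 < b -> `|u| <= b / 2 -> u ^+ 2 <= (u - b * k%:~R) ^+ 2.
Proof.
move=> b_gt0; rewrite ler_norml => /andP [lo hi].
have [->|k_neq0] := eqVneq k 0; first by rewrite mulr0 subr0.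
have k_far : (k%:~R : R) <= -1 \/ 1 <= (k%:~R : R).
  by rewrite lerNr -intrN !ler1z; lia.
have : b * k%:~R <= - b \/ b <= b * k%:~R by case: k_far; [left|right]; nra.
move: (b * k%:~R) => w [w_le | w_ge].
- have : 0 <= (- b - w) * (b - 2 * u) by apply: mulr_ge0; lra.
  nra.
- have : 0 <= (w - b) * (b + 2 * u) by apply: mulr_ge0; lra.
  nra.
Qed.

Lemma Vor_shifted_lattice P b c y z :
  0 < b -> (forall p, P p <-> shifted_lattice b c p) -> P y ->
  Vor P y z <-> forall i, `|z i - y i| <= b / 2.
Proof.
move=> b_gt0 PE /PE [ky yE]; split => [zV i | z_cube g /PE [kg gE]].
- have neighbour (e : int) : (z i - y i) ^+ 2 <= (z i - y i - b * e%:~R) ^+ 2.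
    pose g j := c j + b * (ky j + (j == i)%:Z * e)%:~R.
    have Pg : P g by apply/PE; exists (fun j => ky j + (j == i)%:Z * e).
    have := zV g Pg; rewrite (@dist2_update z y g i); last first.
      by move=> j /negbTE ji; rewrite /g yE ji mul0r addr0.
    suff -> : z i - g i = z i - y i - b * e%:~R by lra.
    by rewrite /g yE eqxx mul1r intrD; ring.
  have := neighbour 1; have := neighbour (-1).
  rewrite ler_norml intrN /=; nra.
- rewrite /dist2; apply: ler_sum => i _.
  have -> : z i - g i = z i - y i - b * (kg i - ky i)%:~R.
    by rewrite gE yE intrD intrN; ring.
  exact: sqr_le_sqr_sub_intmul.
Qed.

Lemma shifted_lattice_dilate P P' b c c' (o v : pt R d) :
  0 < b ->
  (forall p, P' p <-> exists q, P q /\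
     forall i, p i = 2 * (q i - o i) + o i + v i) ->
  (forall i, c' i = 2 * (c i - o i) + o i + v i) ->
  (forall p, P p <-> shifted_lattice b c p) <->
  (forall p, P' p <-> shifted_lattice (2 * b) c' p).
Proof.
move=> b_gt0 P'E c'E; split => [PE p | P'L p].
- rewrite P'E; split => [[q [/PE [k qE] pE]] | [k pE]].
    by exists k => i; rewrite pE qE c'E; ring.
  exists (fun i => c i + b * (k i)%:~R); split; first by apply/PE; exists k.
  by move=> i; rewrite pE c'E; ring.
- pose phi q i := 2 * (q i - o i) + o i + v i.
  have P'phi q : P q -> P' (phi q) by move=> Pq; apply/P'E; exists q.
  split => [/P'phi /P'L [k phiE] | [k pE]].
    by exists k => i; have := phiE i; rewrite /phi c'E; lra.
  have /P'L /P'E [q [Pq phiE]] : shifted_lattice (2 * b) c' (phi p).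
    by exists k => i; rewrite /phi pE c'E; ring.
  suff -> : p = q by [].
  by apply: boolp.funext => i; have := phiE i; rewrite /phi; lra.
Qed.

Lemma odd_intmul_le_half b (k : int) :
  0 < b -> `|b / 2 * (2 * k + 1)%:~R| <= b -> `|b / 2 * (2 * k + 1)%:~R| <= b / 2.
Proof.
move=> b_gt0; rewrite normrM gtr0_norm ?divr_gt0 // -intr_norm => le_b.
have : `|2 * k + 1|%:~R <= 2%:~R :> R by nra.
rewrite ler_int => le2.
have : `|2 * k + 1|%:~R <= 1%:~R :> R by rewrite ler_int; lia.
rewrite mulr1z; nra.
Qed.

End ShiftedLattice.

Lemma alphaS (R : realType) (lam : R) (s : int) :
  alpha lam (s + 1) = 2 * alpha lam s.
Proof.
by rewrite /alpha exprzDr ?expr1z ?unitfE ?pnatr_eq0 //; ring.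
Qed.

Lemma alpha_gt0 (R : realType) (lam : R) (s : int) : 0 < lam -> 0 < alpha lam s.
Proof. by move=> lam_gt0; rewrite /alpha mulr_gt0 // exprz_gt0. Qed.

Section Grids.
Variables (R : realType) (d : nat) (lam : R).
Variables (G : int -> gridset R d) (O : int -> pt R d) (eps : int -> pt R d).
Hypothesis lam_gt0 : 0 < lam.
Hypothesis G0 : forall p, G 0 p <-> scaled_lattice lam p.
Hypothesis GO : forall s, G s (O s).
Hypothesis eps_sign : forall s i, eps s i = 1 \/ eps s i = -1.
Hypothesis GS : forall s p, G (s + 1) p <->
  exists q, G s q /\ forall i, p i = 2 * (q i - O s i) + O s i + alpha lam s / 2 * eps s i.

Definition grid_is_shifted_lattice (s : int) :=
  exists c, forall p, G s p <-> shifted_lattice (alpha lam s) c p.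

Lemma grid_is_shifted_latticeS s :
  grid_is_shifted_lattice s <-> grid_is_shifted_lattice (s + 1).
Proof.
pose v i := alpha lam s / 2 * eps s i.
have dilate c c' : (forall i, c' i = 2 * (c i - O s i) + O s i + v i) ->
    (forall p, G s p <-> shifted_lattice (alpha lam s) c p) <->
    (forall p, G (s + 1) p <-> shifted_lattice (alpha lam (s + 1)) c' p).
  by rewrite alphaS; apply: shifted_lattice_dilate; [exact: alpha_gt0 | exact: GS].
split => [[c Gc] | [c' Gc']].
- by exists (fun i => 2 * (c i - O s i) + O s i + v i); apply/(dilate c).
- exists (fun i => (c' i - O s i - v i) / 2 + O s i); apply/(dilate _ c') => // i.
  by field.
Qed.

Lemma grid_is_shifted_lattice_all s : grid_is_shifted_lattice s.
Proof.
elim/int_ind: s => [|n IHn|n IHn].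
- exists (fun=> 0) => p; rewrite G0 /alpha expr0z mulr1.
  by split => -[k pE]; exists k => i; rewrite pE ?add0r.
- by rewrite -addn1 PoszD; apply: (grid_is_shifted_latticeS n).1.
- apply: (grid_is_shifted_latticeS (- n.+1%:Z)).2.
  by have -> : - n.+1%:Z + 1 = - n%:Z by lia.
Qed.

Lemma coarse_sub_fine_half_odd s x y (i : 'I_d) : G s x -> G (s + 1) y ->
  exists k : int, y i - x i = alpha lam s / 2 * (2 * k + 1)%:~R.
Proof.
have [c Gc] := grid_is_shifted_lattice_all s.
move=> /Gc [kx xE] /GS [q [/Gc [kq qE] yE]].
have [kO OE] := (Gc (O s)).1 (GO s).
pose k := 2 * kq i - kO i - kx i.
have yxE : y i - x i = alpha lam s / 2 * (2 * k%:~R + eps s i).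
  by rewrite yE qE OE xE /k; field.
case: (eps_sign s i) => -> in yxE.
- by exists k; rewrite yxE; congr (_ * _); ring.
- by exists (k - 1); rewrite yxE; congr (_ * _); ring.
Qed.

End Grids.

Theorem lemma3 (R : realType) (d : nat) (hd : (1 <= d)%N) (lam : R) (hlam : 0 < lam)
  (G : int -> gridset R d) (O : int -> pt R d) (eps : int -> pt R d)
  (hG0 : forall p, G 0 p <-> scaled_lattice lam p)
  (hO : forall s, G s (O s))
  (heps : forall s i, eps s i = 1 \/ eps s i = -1)
  (hstep : forall s p, G (s + 1) p <->
     exists q, G s q /\
       forall i, p i = 2 * (q i - O s i) + O s i + alpha lam s / 2 * eps s i)
  (s : int) (x y : pt R d)
  (hx : G s x) (hy : G (s + 1) y) (hxy : Vor (G (s + 1)) y x) :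
  forall z, Vor (G s) x z -> Vor (G (s + 1)) y z.
Proof.
move=> z zV.
have a_gt0 := alpha_gt0 s hlam; have a'_gt0 := alpha_gt0 (s + 1) hlam.
have [c Gs] := grid_is_shifted_lattice_all hlam hG0 hstep s.
have [c' Gs'] := grid_is_shifted_lattice_all hlam hG0 hstep (s + 1).
have zx := (Vor_shifted_lattice z a_gt0 Gs hx).1 zV.
have xy := (Vor_shifted_lattice x a'_gt0 Gs' hy).1 hxy.
apply/(Vor_shifted_lattice z a'_gt0 Gs' hy) => i.
have yx_half : `|y i - x i| <= alpha lam s / 2.
  have [k yxE] := coarse_sub_fine_half_odd hlam hG0 hO heps hstep i hx hy.
  rewrite yxE; apply: odd_intmul_le_half => //.
  by rewrite -yxE distrC; have := xy i; rewrite alphaS; lra.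
rewrite alphaS; apply: le_trans (ler_distD (x i) _ _) _.
by rewrite [`|x i - _|]distrC; have := zx i; lra.
Qed.
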